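(* Let $\Sigma=(I,X,\mathcal U,\phi,Y,h)$ be a forward complete control system with outputs. Then $\Sigma$ is OUGS if and only if $\Sigma$ is OUGB and OULS.
   Context: Let $I\in\{\mathbb N_0,\mathbb R_0^+\}$. A forward complete control system with outputs $\Sigma=(I,X,\mathcal U,\phi,Y,h)$ consists of: a normed space $(X,\|\cdot\|_X)$; a vector space $U$ and a normed linear subspace $(\mathcal U,\|\cdot\|_{\mathcal U})$ of $\{u:I\to U\}$ such that for all $u\in\mathcal U,\tau\in I$, $u(\cdot+\tau)\in\mathcal U$ with $\|u(\cdot+\tau)\|_{\mathcal U}\le\|u\|_{\mathcal U}$, and for $t_2\ge t_1\ge 0$ the function $u|_{[t_1,t_2]}$ ($u$ on $[t_1,t_2]$, $0$ elsewhere) lies in $\mathcal U$ with norm $\le\|u\|_{\mathcal U}$; a map $\phi:I\times X\times\mathcal U\to X$ with $\phi(0,x,u)=x$, causality, and cocycle property $\phi(t+s,x,u)=\phi(s,\phi(t,x,u),u(t+\cdot))$; a normed space $Y$ and $h:X\times U\to Y$. Write $y(t,x,u)=h(\phi(t,x,u),u(t))$, $B_r=\{x:\|x\|_X<r\}$, $B_{r,\mathcal U}=\{u:\|u\|_{\mathcal U}<r\}$; $\mathcal K_\infty$ = unbounded continuous strictly increasing functions $\mathbb R_0^+\to\mathbb R_0^+$ vanishing at $0$. OUGS: $\exists\sigma,\gamma\in\mathcal K_\infty$ with $\|y(t,x,u)\|_Y\le\sigma(\|x\|_X)+\gamma(\|u\|_{\mathcal U})$ for all $x\in X,u\in\mathcal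 U,t\in I$. OULS: $\exists r>0,\sigma,\gamma\in\mathcal K_\infty$ with the same inequality for all $x\in B_r,u\in B_{r,\mathcal U},t\in I$. OUGB: $\exists\sigma,\gamma\in\mathcal K_\infty,c>0$ with $\|y(t,x,u)\|_Y\le\sigma(\|x\|_X)+\gamma(\|u\|_{\mathcal U})+c$ for all $x,u,t$. *)

From HB Require Import structures.
From mathcomp Require Import all_boot all_order all_algebra.
From mathcomp Require Import all_classical all_reals all_analysis.
Import Order.TTheory GRing.Theory Num.Theory.
Import numFieldNormedType.Exports.
Set Implicit Arguments. Unset Strict Implicit. Unset Printing Implicit Defensive.
Local Open Scope classical_set_scope.
Local Open Scope ring_scope.

(* Time set I: disc = true gives N_0 (embedded in R as {0,1,2,...}),
   disc = false gives R_0^+. *)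
Definition Iset (R : realType) (disc : bool) : set R :=
  if disc then [set t | exists n : nat, t = n%:R] else [set t | 0 <= t].
Arguments Iset : clear implicits.

Definition time (R : realType) (disc : bool) : Type := {t : R | Iset R disc t}.

Lemma Iset0 (R : realType) (disc : bool) : Iset R disc 0.
Proof. by case: disc => /=; [exists 0%N|]. Qed.

Lemma Iset_add (R : realType) (disc : bool) (s t : R) :
  Iset R disc s -> Iset R disc t -> Iset R disc (s + t).
Proof.
case: disc => /=; last exact: addr_ge0.
by move=> [m ->] [n ->]; exists (m + n)%N; rewrite natrD.
Qed.

Definition tzero (R : realType) (disc : bool) : time R disc :=
  exist _ 0 (Iset0 R disc).

Definition tadd (R : realType) (disc : bool) (s t : time R disc) : time R disc :=
  exist _ (sval s + sval t) (Iset_add (proj2_sig s) (proj2_sig t)).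

Definition restr (R : realType) (disc : bool) (U : lmodType R)
  (u : time R disc -> U) (t1 t2 : time R disc) : time R disc -> U :=
  fun s => if (sval t1 <= sval s <= sval t2) then u s else 0.

Definition Kinf (R : realType) (f : R -> R) : Prop :=
  [/\ f 0 = 0,
      {within [set x : R | 0 <= x], continuous f},
      (forall x y : R, 0 <= x -> x < y -> f x < f y) &
      (forall M : R, exists x : R, 0 <= x /\ M < f x)].

(* Forward complete control system (I, X, UU, phi, Y, h):
   UU : the set of admissible inputs (a linear subspace of {u : I -> U}),
   nU : its norm.  phi is only meaningful for u in UU. *)
Definition is_fc_control_system (R : realType) (disc : bool)
  (X : normedModType R) (U : lmodType R)
  (UU : set (time R disc -> U)) (nU : (time R disc -> U) -> R)
  (phi : time R disc -> X -> (time R disc -> U) -> X) : Prop :=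
  [/\ UU (fun _ => 0),
      (forall u v, UU u -> UU v -> UU (fun t => u t + v t)) &
      (forall (a : R) u, UU u -> UU (fun t => a *: u t))] /\
  [/\ (forall u, UU u -> (nU u = 0 <-> u = (fun _ => 0))),
      (forall u v, UU u -> UU v -> nU (fun t => u t + v t) <= nU u + nU v) &
      (forall (a : R) u, UU u -> nU (fun t => a *: u t) = `|a| * nU u)] /\
  (forall u (tau : time R disc), UU u ->
     UU (fun s => u (tadd s tau)) /\ nU (fun s => u (tadd s tau)) <= nU u) /\
  (forall u (t1 t2 : time R disc), UU u -> sval t1 <= sval t2 ->
     UU (restr u t1 t2) /\ nU (restr u t1 t2) <= nU u) /\
  (forall x u, UU u -> phi (tzero R disc) x u = x) /\
  (forall (t : time R disc) x u v, UU u -> UU v ->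
     (forall s : time R disc, sval s <= sval t -> u s = v s) ->
     forall s : time R disc, sval s <= sval t -> phi s x u = phi s x v) /\
  (forall (t s : time R disc) x u, UU u ->
     phi (tadd t s) x u = phi s (phi t x u) (fun r => u (tadd r t))).

Definition outp (R : realType) (disc : bool) (X : normedModType R) (U : lmodType R)
  (Y : normedModType R)
  (phi : time R disc -> X -> (time R disc -> U) -> X) (h : X -> U -> Y)
  (t : time R disc) (x : X) (u : time R disc -> U) : Y :=
  h (phi t x u) (u t).

Definition OUGS (R : realType) (disc : bool) (X : normedModType R) (U : lmodType R)
  (Y : normedModType R) (UU : set (time R disc -> U)) (nU : (time R disc -> U) -> R)
  (phi : time R disc -> X -> (time R disc -> U) -> X) (h : X -> U -> Y) : Prop :=
  exists sigma gamma : R -> R, Kinf sigma /\ Kinf gamma /\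
    forall (x : X) u (t : time R disc), UU u ->
      `|outp phi h t x u| <= sigma `|x| + gamma (nU u).

Definition OULS (R : realType) (disc : bool) (X : normedModType R) (U : lmodType R)
  (Y : normedModType R) (UU : set (time R disc -> U)) (nU : (time R disc -> U) -> R)
  (phi : time R disc -> X -> (time R disc -> U) -> X) (h : X -> U -> Y) : Prop :=
  exists r : R, 0 < r /\ exists sigma gamma : R -> R, Kinf sigma /\ Kinf gamma /\
    forall (x : X) u (t : time R disc), UU u -> `|x| < r -> nU u < r ->
      `|outp phi h t x u| <= sigma `|x| + gamma (nU u).

Definition OUGB (R : realType) (disc : bool) (X : normedModType R) (U : lmodType R)
  (Y : normedModType R) (UU : set (time R disc -> U)) (nU : (time R disc -> U) -> R)
  (phi : time R disc -> X -> (time R disc -> U) -> X) (h : X -> U -> Y) : Prop :=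
  exists (sigma gamma : R -> R) (c : R), Kinf sigma /\ Kinf gamma /\ 0 < c /\
    forall (x : X) u (t : time R disc), UU u ->
      `|outp phi h t x u| <= sigma `|x| + gamma (nU u) + c.

(* A global bound with an additive constant c fails to be of gain type only
   near the origin, and there the local bound takes over.  Away from the ball
   of radius r, i.e. when |x| >= r or ||u|| >= r, the constant is absorbed by
   the linear gain: c <= (c/r) |x| + (c/r) ||u||.  Hence
   sigma + sigma_loc + (c/r) id and gamma + gamma_loc + (c/r) id are gains
   valid everywhere. *)

From HB Require Import structures.
From mathcomp Require Import all_boot all_order all_algebra.
From mathcomp Require Import all_classical all_reals all_analysis.
From mathcomp Require Import lra.
Import Order.TTheory GRing.Theory Num.Theory.
Import numFieldNormedType.Exports.
Set Implicit Arguments. Unset Strict Implicit. Unset Printing Implicit Defensive.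
Local Open Scope classical_set_scope.
Local Open Scope ring_scope.

Section KinfClosure.
Variable R : realType.

Lemma Kinf_ge0 (f : R -> R) (x : R) : Kinf f -> 0 <= x -> 0 <= f x.
Proof.
case=> f0 _ mf _; rewrite le_eqVlt => /orP[/eqP<-|x0]; first by rewrite f0.
by rewrite -f0 ltW // mf.
Qed.

Lemma Kinf_add (f g : R -> R) : Kinf f -> Kinf g -> Kinf (fun s => f s + g s).
Proof.
move=> Kf Kg; case: (Kf) => f0 cf mf uf; case: (Kg) => g0 cg mg _; split.
- by rewrite f0 g0 addr0.
- by move=> x; apply: continuousD; [exact: cf | exact: cg].
- by move=> x y x0 xy; apply: ltrD; [exact: mf | exact: mg].
- move=> M; have [x [x0 Mx]] := uf M; exists x; split => //.
  by rewrite -[M]addr0 ltr_leD // Kinf_ge0.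
Qed.

Lemma Kinf_scale (k : R) : 0 < k -> Kinf (fun s => k * s).
Proof.
move=> k0; split.
- by rewrite mulr0.
- exact/continuous_subspaceT/mulrl_continuous.
- by move=> x y _ xy; rewrite ltr_pM2l.
- move=> M; exists ((`|M| + 1) / k); split.
    by apply: divr_ge0; [rewrite addr_ge0 | exact: ltW].
  by rewrite mulrC divfK ?gt_eqF // (le_lt_trans (ler_norm M)) ?ltrDl.
Qed.

End KinfClosure.

Section Gluing.
Variables (R : realType) (c r : R).
Hypotheses (c_ge0 : 0 <= c) (r_gt0 : 0 < r).

Definition glued_gain (f f_loc : R -> R) (s : R) : R := f s + f_loc s + c / r * s.

Lemma Kinf_glued_gain (f f_loc : R -> R) :
  0 < c -> Kinf f -> Kinf f_loc -> Kinf (glued_gain f f_loc).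
Proof.
move=> c_gt0 Kf Kf_loc.
by apply: Kinf_add; [exact: Kinf_add | exact/Kinf_scale/divr_gt0].
Qed.

Lemma const_le_glued_linear (a : R) : r <= a -> c <= c / r * a.
Proof. by move=> ra; rewrite mulrAC ler_pdivlMr // ler_wpM2l. Qed.

Lemma glued_gain_bound (sigma gamma sigma_loc gamma_loc : R -> R) (a b y : R) :
  Kinf sigma -> Kinf gamma -> Kinf sigma_loc -> Kinf gamma_loc ->
  0 <= a -> 0 <= b ->
  y <= sigma a + gamma b + c ->
  (a < r -> b < r -> y <= sigma_loc a + gamma_loc b) ->
  y <= glued_gain sigma sigma_loc a + glued_gain gamma gamma_loc b.
Proof.
move=> Ks Kg Ksl Kgl a0 b0 y_glob y_loc; rewrite /glued_gain.
have := Kinf_ge0 Ks a0; have := Kinf_ge0 Kg b0.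
have := Kinf_ge0 Ksl a0; have := Kinf_ge0 Kgl b0.
have k_ge0 : 0 <= c / r by rewrite divr_ge0 // ltW.
have ka : 0 <= c / r * a by rewrite mulr_ge0.
have kb : 0 <= c / r * b by rewrite mulr_ge0.
have [ar|/const_le_glued_linear] := ltP a r; last lra.
have [br|/const_le_glued_linear] := ltP b r; last lra.
have := y_loc ar br; lra.
Qed.

End Gluing.

Lemma fc_input_norm_ge0 (R : realType) (disc : bool)
  (X : normedModType R) (U : lmodType R) (UU : set (time R disc -> U))
  (nU : (time R disc -> U) -> R) (phi : time R disc -> X -> (time R disc -> U) -> X)
  (u : time R disc -> U) :
  is_fc_control_system UU nU phi -> UU u -> 0 <= nU u.
Proof.
move=> [[U0 _ UZ] [[N0 ND NZ] _]] Uu.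
have u_sub_u : (fun t => u t + (-1) *: u t) = (fun _ => 0).
  by apply/funext => t; rewrite scaleN1r subrr.
have := ND _ _ Uu (UZ (-1) _ Uu).
by rewrite u_sub_u (proj2 (N0 _ U0) erefl) NZ // normrN normr1 mul1r; lra.
Qed.

Section OutputStability.
Variables (R : realType) (disc : bool) (X : normedModType R) (U : lmodType R)
  (Y : normedModType R) (UU : set (time R disc -> U)) (nU : (time R disc -> U) -> R)
  (phi : time R disc -> X -> (time R disc -> U) -> X) (h : X -> U -> Y).

Lemma OUGS_OUGB : OUGS UU nU phi h -> OUGB UU nU phi h.
Proof.
case=> sigma [gamma [Ks [Kg bound]]]; exists sigma, gamma, 1.
do 3 split => //; move=> x u t Uu.
by rewrite (le_trans (bound _ _ _ Uu)) ?lerDl.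
Qed.

Lemma OUGS_OULS : OUGS UU nU phi h -> OULS UU nU phi h.
Proof.
case=> sigma [gamma [Ks [Kg bound]]]; exists 1; split => //.
by exists sigma, gamma; do 2 split => //; move=> x u t Uu _ _; exact: bound.
Qed.

Lemma OUGB_OULS_OUGS : is_fc_control_system UU nU phi ->
  OUGB UU nU phi h -> OULS UU nU phi h -> OUGS UU nU phi h.
Proof.
move=> fc [sigma [gamma [c [Ks [Kg [c_gt0 glob]]]]]].
move=> [r [r_gt0 [sigma_loc [gamma_loc [Ksl [Kgl loc]]]]]].
exists (glued_gain c r sigma sigma_loc), (glued_gain c r gamma gamma_loc).
split; first exact: Kinf_glued_gain.
split; first exact: Kinf_glued_gain.
move=> x u t Uu; apply: glued_gain_bound => //.
- exact: ltW.
- exact: fc_input_norm_ge0 fc Uu.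
- exact: glob.
- exact: loc.
Qed.

End OutputStability.

Theorem lemma8 (R : realType) (disc : bool)
  (X : normedModType R) (U : lmodType R) (Y : normedModType R)
  (UU : set (time R disc -> U)) (nU : (time R disc -> U) -> R)
  (phi : time R disc -> X -> (time R disc -> U) -> X) (h : X -> U -> Y) :
  is_fc_control_system UU nU phi ->
  (OUGS UU nU phi h <-> OUGB UU nU phi h /\ OULS UU nU phi h).
Proof.
move=> fc; split.
- by move=> ougs; split; [exact: OUGS_OUGB | exact: OUGS_OULS].
- by case; exact: OUGB_OULS_OUGS.
Qed.
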